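(* Let $\mathcal{A}\subseteq M_2(\mathbb{C})$ be the algebra of upper triangular $2\times 2$ matrices $\begin{pmatrix}\alpha&\beta\\0&\gamma\end{pmatrix}$, and for $c\in\mathbb{C}\setminus\{0\}$ let $V_c=\left\{\begin{pmatrix} y & x\\ 0 & y+cx\end{pmatrix} : x,y\in\mathbb{C}\right\}$. Then for every $c\in\mathbb{C}\setminus\{0\}$ and every $\phi\in\Phi(\mathcal{A})$, $\phi\colon\mathcal{A}\to\mathcal{B}\subseteq\mathbf{B}(\mathcal{H})$, with $\mathcal{A}_\phi = V_c$, we have $\|\phi\|\,\|\phi^{-1}\| \ge \frac{1}{|c|}$.
   Context: $\Phi(\mathcal{A})$ is the set of injective homomorphisms $\phi\colon\mathcal{A}\to\mathcal{B}$ onto an operator algebra $\mathcal{B}\subseteq\mathbf{B}(\mathcal{H})$ with $\|\phi\|_{cb}<\infty$ and $\|\phi^{-1}\|_{cb}<\infty$ (cb norms with respect to matrix norms inherited from $M_n(\mathbf{B}(\mathcal{H}))$, and the norm of $M_2(\mathbb{C})$ on $\mathcal{A}$); $\mathcal{A}_\phi=\phi^{-1}(\mathcal{B}\cap\mathcal{B}^* )$, where $\mathcal{B}^*$ is the set of adjoints of elements of $\mathcal{B}$. Here $\|\phi\|,\|\phi^{-1}\|$ are the ordinary operator norms. *)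

From HB Require Import structures.
From mathcomp Require Import all_boot all_order all_algebra.
From mathcomp Require Import all_classical reals.
From mathcomp Require Import complex.
Set Implicit Arguments. Unset Strict Implicit. Unset Printing Implicit Defensive.
Import Order.TTheory GRing.Theory Num.Theory.
Local Open Scope ring_scope.
Local Open Scope classical_set_scope.

Section Defs.
Variable R : realType.
Local Notation C := (R[i]).

Definition hnorm2 (H : lmodType C) (ip : H -> H -> C) (x : H) : R :=
  complex.Re (ip x x).
Definition hnorm (H : lmodType C) (ip : H -> H -> C) (x : H) : R :=
  Num.sqrt (hnorm2 ip x).

Definition is_hilbert (H : lmodType C) (ip : H -> H -> C) : Prop :=
  [/\ (forall (a : C) (x y z : H), ip (a *: x + y) z = a * ip x z + ip y z),
      (forall x y : H, ip y x = (ip x y)^*),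
      (forall x : H, 0 <= ip x x),
      (forall x : H, ip x x = 0 -> x = 0) &
      (forall u : nat -> H,
         (forall e : R, 0 < e -> exists N, forall m n, (N <= m)%N -> (N <= n)%N ->
             hnorm ip (u m - u n) < e) ->
         exists l : H, forall e : R, 0 < e -> exists N, forall n, (N <= n)%N ->
             hnorm ip (u n - l) < e)].

Definition is_bounded_op (H : lmodType C) (ip : H -> H -> C) (T : H -> H) : Prop :=
  (forall (a : C) (x y : H), T (a *: x + y) = a *: T x + T y) /\
  exists M : R, forall x, hnorm ip (T x) <= M * hnorm ip x.

Definition opmx_norm (H : lmodType C) (ip : H -> H -> C) (n : nat)
    (T : 'I_n -> 'I_n -> H -> H) : R :=
  sup [set Num.sqrt (\sum_(i < n) hnorm2 ip (\sum_(j < n) T i j (x j)))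
      | x in [set x : 'I_n -> H | \sum_(j < n) hnorm2 ip (x j) <= 1]].

Definition op_norm (H : lmodType C) (ip : H -> H -> C) (T : H -> H) : R :=
  opmx_norm ip (fun _ _ : 'I_1 => T).

Definition vnorm2 (v : 'cV[C]_2) : R := \sum_(k < 2) Normc.normc (v k 0) ^+ 2.

(* norm of an element X of M_n(M_2(C)) = M_{2n}(C), i.e. the operator norm
   for the Euclidean norm on (C^2)^n = C^{2n} *)
Definition mx2blk_norm (n : nat) (X : 'I_n -> 'I_n -> 'M[C]_2) : R :=
  sup [set Num.sqrt (\sum_(i < n) vnorm2 (\sum_(j < n) X i j *m v j))
      | v in [set v : 'I_n -> 'cV[C]_2 | \sum_(j < n) vnorm2 (v j) <= 1]].

Definition mx2_norm (a : 'M[C]_2) : R := mx2blk_norm (fun _ _ : 'I_1 => a).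

Definition upper_tri : set 'M[C]_2 := [set a | a ord_max ord0 = 0].

Definition Vc (c : C) : set 'M[C]_2 :=
  [set a | a ord_max ord0 = 0 /\ a ord_max ord_max = a ord0 ord0 + c * a ord0 ord_max].

Definition is_inj_hom (H : lmodType C) (ip : H -> H -> C)
    (phi : 'M[C]_2 -> H -> H) : Prop :=
  [/\ (forall a, upper_tri a -> is_bounded_op ip (phi a)),
      (forall (k : C) a b, upper_tri a -> upper_tri b ->
           forall x, phi (k *: a + b) x = k *: phi a x + phi b x),
      (forall a b, upper_tri a -> upper_tri b ->
           forall x, phi (a * b) x = phi a (phi b x)) &
      (forall a b, upper_tri a -> upper_tri b -> phi a = phi b -> a = b)].

Definition cb_bounded (H : lmodType C) (ip : H -> H -> C) (phi : 'M[C]_2 -> H -> H) :=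
  exists M : R, forall n (X : 'I_n -> 'I_n -> 'M[C]_2),
    (forall i j, upper_tri (X i j)) ->
    opmx_norm ip (fun i j => phi (X i j)) <= M * mx2blk_norm X.

(* ||phi^{-1}||_cb < oo  (phi^{-1} (phi_n X) = X) *)
Definition cb_inv_bounded (H : lmodType C) (ip : H -> H -> C) (phi : 'M[C]_2 -> H -> H) :=
  exists M : R, forall n (X : 'I_n -> 'I_n -> 'M[C]_2),
    (forall i j, upper_tri (X i j)) ->
    mx2blk_norm X <= M * opmx_norm ip (fun i j => phi (X i j)).

Definition in_Phi (H : lmodType C) (ip : H -> H -> C) (phi : 'M[C]_2 -> H -> H) : Prop :=
  [/\ is_inj_hom ip phi, cb_bounded ip phi & cb_inv_bounded ip phi].

Definition in_B (H : lmodType C) (phi : 'M[C]_2 -> H -> H) (T : H -> H) : Prop :=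
  exists2 a, upper_tri a & phi a = T.
Definition in_Bstar (H : lmodType C) (ip : H -> H -> C) (phi : 'M[C]_2 -> H -> H)
    (T : H -> H) : Prop :=
  exists2 S, in_B phi S & forall x y, ip (S x) y = ip x (T y).

Definition A_phi (H : lmodType C) (ip : H -> H -> C) (phi : 'M[C]_2 -> H -> H)
  : set 'M[C]_2 :=
  [set a | upper_tri a /\ in_B phi (phi a) /\ in_Bstar ip phi (phi a)].

Definition hom_norm (H : lmodType C) (ip : H -> H -> C) (phi : 'M[C]_2 -> H -> H) : R :=
  sup [set op_norm ip (phi a) | a in [set a | upper_tri a /\ mx2_norm a <= 1]].
Definition hom_inv_norm (H : lmodType C) (ip : H -> H -> C) (phi : 'M[C]_2 -> H -> H) : R :=
  sup [set mx2_norm a | a in [set a | upper_tri a /\ op_norm ip (phi a) <= 1]].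

End Defs.

From HB Require Import structures.
From mathcomp Require Import all_boot all_order all_algebra.
From mathcomp Require Import all_classical reals.
From mathcomp Require Import complex.
From mathcomp Require Import ring lra.
Set Implicit Arguments. Unset Strict Implicit. Unset Printing Implicit Defensive.
Import Order.TTheory GRing.Theory Num.Theory.
Local Open Scope ring_scope.
Local Open Scope classical_set_scope.

(* P = [[0, 1/c], [0, 1]] is an idempotent of V_c with ||P|| >= 1/|c|.  For a
   in A_phi the adjoint of phi(a) is phi(b) with b again in A_phi; as A_phi = V_c
   is commutative, phi(P) is an idempotent commuting with its adjoint, i.e. an
   orthogonal projection, so ||phi(P)|| <= 1 and ||phi^{-1}|| >= ||P|| >= 1/|c|.
   Also phi(1) is a nonzero idempotent, whence ||phi|| >= ||phi(1)|| >= 1. *)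

Lemma sup_ge0 (R : realType) (E : set R) x : E x -> 0 <= x -> 0 <= sup E.
Proof.
move=> Ex x0; have [supE|/sup_out->//] := pselect (has_sup E).
exact: le_trans x0 (sup_upper_bound supE Ex).
Qed.

Lemma mulr_le_norm (R : realDomainType) (M t : R) : 0 <= t <= 1 -> M * t <= `|M|.
Proof.
case/andP=> t0 t1; apply: le_trans (ler_wpM2r t0 (ler_norm M)) _.
by rewrite ler_piMr.
Qed.

Lemma linear_map0 (R : pzRingType) (U V : lmodType R) (T : U -> V) :
  (forall a x y, T (a *: x + y) = a *: T x + T y) -> T 0 = 0.
Proof.
move=> linT; have := linT 1 0 0; rewrite !scale1r addr0.
by rewrite -[X in X = _]addr0 => /addrI.
Qed.

Section InnerProduct.
Variables (R : realType) (H : lmodType R[i]) (ip : H -> H -> R[i]).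
Hypothesis hH : is_hilbert ip.

Lemma ip0l z : ip 0 z = 0.
Proof.
case: hH => linip _ _ _ _; have := linip 1 0 0 z; rewrite scale1r addr0 mul1r.
by rewrite -[X in X = _]addr0 => /addrI.
Qed.

Lemma ip0r z : ip z 0 = 0.
Proof. by case: hH => _ ipC _ _ _; rewrite ipC ip0l conjC0. Qed.

Lemma ipDl u v w : ip (u + v) w = ip u w + ip v w.
Proof. by case: hH => linip _ _ _ _; rewrite -[u]scale1r linip mul1r scale1r. Qed.

Lemma ipDr u v w : ip u (v + w) = ip u v + ip u w.
Proof. by case: hH => _ ipC _ _ _; rewrite [LHS]ipC (ipC v) (ipC w) ipDl rmorphD. Qed.

Lemma ipZl u k v : ip (k *: v) u = k * ip v u.
Proof. by case: hH => linip _ _ _ _; rewrite -[k *: v]addr0 linip ip0l addr0. Qed.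

Lemma ipZr u k v : ip u (k *: v) = k^* * ip u v.
Proof. by case: hH => _ ipC _ _ _; rewrite [LHS]ipC (ipC v) ipZl rmorphM. Qed.

Lemma hnorm2_ge0 x : 0 <= hnorm2 ip x.
Proof.
case: hH => _ _ ip_ge0 _ _; have := ip_ge0 x; rewrite /hnorm2.
by case: (ip x x) => a b; rewrite lecE /= => /andP[].
Qed.

Lemma hnorm2_gt0 x : x != 0 -> 0 < hnorm2 ip x.
Proof.
case: hH => _ _ ip_ge0 ip_eq0 _ x0; have := ip_ge0 x; have := ip_eq0 x.
rewrite /hnorm2; case: (ip x x) => a b; rewrite lecE /= => ip0 /andP[/eqP b0 a0].
rewrite lt_neqAle a0 andbT; apply: contra x0 => /eqP a00.
by apply/eqP/ip0; rewrite b0 -a00.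
Qed.

Lemma hnorm2_0 : hnorm2 ip 0 = 0.
Proof. by rewrite /hnorm2 ip0l. Qed.

Lemma hnorm2Zr (r : R) y : hnorm2 ip (r%:C%C *: y) = r ^+ 2 * hnorm2 ip y.
Proof.
have rC : (r%:C%C)^* = r%:C%C := conjc_real r.
rewrite /hnorm2 ipZl ipZr rC.
by case: (ip y y) => a b /=; rewrite !mul0r !subr0 expr2 mulrA.
Qed.

Lemma pythagoras u v : ip u v = 0 -> hnorm2 ip (u + v) = hnorm2 ip u + hnorm2 ip v.
Proof.
case: hH => _ ipC _ _ _ uv; have vu : ip v u = 0 by rewrite ipC uv conjC0.
rewrite /hnorm2 !ipDl !ipDr uv vu add0r addr0.
by case: (ip u u) (ip v v) => [? ?] [? ?].
Qed.

(* Such a Q is the orthogonal projection onto its range: x - Q x lies in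
   ker Q = ker S, which is orthogonal to the range of Q. *)
Lemma normal_idempotent_contraction (Q S : H -> H) :
  (forall a x y, Q (a *: x + y) = a *: Q x + Q y) ->
  (forall a x y, S (a *: x + y) = a *: S x + S y) ->
  (forall x, Q (Q x) = Q x) ->
  (forall u v, ip (S u) v = ip u (Q v)) ->
  (forall x, S (Q x) = Q (S x)) ->
  forall x, hnorm2 ip (Q x) <= hnorm2 ip x.
Proof.
move=> linQ linS QQ adjS SQ x; case: hH => _ ipC _ ip_eq0 _.
set z := x - Q x.
have Qz : Q z = 0 by rewrite /z -scaleN1r addrC linQ QQ scaleN1r addNr.
have Sz : S z = 0 by apply: ip_eq0; rewrite adjS -SQ Qz (linear_map0 linS) ip0r.
have Qxz : ip (Q x) z = 0 by rewrite ipC -adjS Sz ip0l conjC0.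
have -> : hnorm2 ip x = hnorm2 ip (Q x + z) by rewrite /z addrC subrK.
by rewrite pythagoras // lerDl hnorm2_ge0.
Qed.

Lemma op_norm_ge0 T : 0 <= op_norm ip T.
Proof.
apply: (@sup_ge0 _ _ (Num.sqrt (hnorm2 ip (T 0)))); last exact: sqrtr_ge0.
by exists (fun _ => 0); rewrite /= !big_ord1 ?hnorm2_0.
Qed.

Lemma op_norm_le1 T : (forall x, hnorm2 ip (T x) <= hnorm2 ip x) -> op_norm ip T <= 1.
Proof.
move=> T_le; apply: ge_sup.
  by exists (Num.sqrt (hnorm2 ip (T 0))), (fun _ => 0); rewrite /= !big_ord1 ?hnorm2_0.
move=> y [x /=]; rewrite !big_ord1 => x_le1 <-.
by rewrite -sqrtr1 ler_wsqrtr // (le_trans (T_le _)).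
Qed.

Lemma op_norm_ge_image T M x :
  (forall y, hnorm ip (T y) <= M * hnorm ip y) -> hnorm2 ip x <= 1 ->
  hnorm ip (T x) <= op_norm ip T.
Proof.
move=> T_bnd x_le1; apply: ub_le_sup; last by exists (fun _ => x); rewrite /= !big_ord1.
exists `|M| => z [y /=]; rewrite !big_ord1 => y_le1 <-.
apply: le_trans (T_bnd _) (mulr_le_norm _ _).
by rewrite sqrtr_ge0 -sqrtr1 ler_wsqrtr.
Qed.

Lemma op_norm_ge1 T M y :
  (forall a x z, T (a *: x + z) = a *: T x + T z) ->
  (forall x, hnorm ip (T x) <= M * hnorm ip x) ->
  y != 0 -> T y = y -> 1 <= op_norm ip T.
Proof.
move=> linT T_bnd y0 Ty; set r := (hnorm ip y)^-1.
have ry1 : hnorm2 ip (r%:C%C *: y) = 1.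
  by rewrite hnorm2Zr /r /hnorm exprVn sqr_sqrtr ?hnorm2_ge0 ?mulVf ?gt_eqF ?hnorm2_gt0.
have Try : T (r%:C%C *: y) = r%:C%C *: y.
  by have := linT r%:C%C y 0; rewrite (linear_map0 linT) !addr0 Ty.
by have := op_norm_ge_image T_bnd (x := r%:C%C *: y); rewrite ry1 lexx Try /hnorm ry1 sqrtr1; apply.
Qed.

End InnerProduct.

Section TwoByTwo.
Variable R : realType.
Local Notation C := R[i].

Lemma ord2P (i : 'I_2) : i = ord0 \/ i = ord_max.
Proof. by case: i => [[|[|//]]] hi; [left|right]; apply: val_inj. Qed.

Lemma lift0_ord_max : lift ord0 (ord0 : 'I_1) = ord_max :> 'I_2.
Proof. exact: val_inj. Qed.

Lemma Vc_mulC (c : C) a b : Vc c a -> Vc c b -> a * b = b * a.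
Proof.
move=> [a10 a11] [b10 b11]; apply/matrixP => i j.
rewrite !mxE !big_ord_recl !big_ord0 !lift0_ord_max.
by case: (ord2P i) => ->; case: (ord2P j) => ->; rewrite ?a10 ?b10 ?a11 ?b11 /=; ring.
Qed.

Definition Vc_idem (c : C) : 'M[C]_2 :=
  \matrix_(i, j) (if j == ord0 then 0 else if i == ord0 then c^-1 else 1).

Lemma Vc_idem_in_Vc c : c != 0 -> Vc c (Vc_idem c).
Proof. by move=> c0; split; rewrite !mxE ?eqxx //= add0r mulfV. Qed.

Lemma Vc_idem_idem c : Vc_idem c * Vc_idem c = Vc_idem c.
Proof.
apply/matrixP => i j; rewrite !mxE !big_ord_recl !big_ord0 !lift0_ord_max !mxE /=.
by case: (ord2P i) => ->; case: (ord2P j) => ->; rewrite ?mxE ?eqxx /=; ring.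
Qed.

Lemma vnorm2E (v : 'cV[C]_2) :
  vnorm2 v = Normc.normc (v ord0 0) ^+ 2 + Normc.normc (v ord_max 0) ^+ 2.
Proof. by rewrite /vnorm2 !big_ord_recl big_ord0 lift0_ord_max addr0. Qed.

Lemma vnorm2_0 : vnorm2 (0 : 'cV[C]_2) = 0.
Proof. by rewrite vnorm2E !mxE Normc.normc0 expr0n addr0. Qed.

Lemma mx2_norm_ge0 (a : 'M[C]_2) : 0 <= mx2_norm a.
Proof.
apply: (@sup_ge0 _ _ (Num.sqrt (vnorm2 (a *m 0)))); last exact: sqrtr_ge0.
by exists (fun _ => 0); rewrite /= !big_ord1 ?vnorm2_0.
Qed.

Lemma mx2_norm1 : mx2_norm (1 : 'M[C]_2) <= 1.
Proof.
apply: ge_sup.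
  by exists (Num.sqrt (vnorm2 (1 *m 0))), (fun _ => 0); rewrite /= !big_ord1 ?vnorm2_0.
move=> y [v /=]; rewrite !big_ord1 mul1mx => v_le1 <-.
by rewrite -sqrtr1 ler_wsqrtr.
Qed.

Lemma mx2_norm_Vc_idem c : (Normc.normc c)^-1 <= mx2_norm (Vc_idem c).
Proof.
rewrite -Normc.normcV; set n := Normc.normc c^-1.
have PvE v : vnorm2 (Vc_idem c *m v) = (n ^+ 2 + 1) * Normc.normc (v ord_max 0) ^+ 2.
  rewrite vnorm2E !mxE !big_ord_recl !big_ord0 !lift0_ord_max !mxE /=.
  by rewrite !mul0r !add0r !addr0 mul1r Normc.normcM -/n; ring.
have n_le : n <= Num.sqrt (n ^+ 2 + 1).
  by apply: le_trans (ler_norm n) _; rewrite -sqrtr_sqr ler_wsqrtr // lerDl.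
apply: le_trans n_le _; apply: ub_le_sup.
  exists (Num.sqrt (n ^+ 2 + 1)) => y [v /=]; rewrite !big_ord1 PvE vnorm2E => v_le1 <-.
  rewrite ler_wsqrtr // ler_piMr ?addr_ge0 ?sqr_ge0 //.
  by apply: le_trans v_le1; rewrite lerDr sqr_ge0.
pose e : 'cV[C]_2 := \col_k (if k == ord0 then 0 else 1).
have [e0 e1] : e ord0 0 = 0 /\ e ord_max 0 = 1 by rewrite !mxE.
exists (fun _ => e); rewrite /= !big_ord1 ?PvE ?vnorm2E e1 Normc.normc1 expr1n ?mulr1 //.
by rewrite e0 Normc.normc0 expr0n add0r.
Qed.

End TwoByTwo.

Section HomNorms.
Variables (R : realType) (H : lmodType R[i]) (ip : H -> H -> R[i]).
Variable phi : 'M[R[i]]_2 -> H -> H.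
Hypothesis hH : is_hilbert ip.

Lemma upper_tri0 : upper_tri (0 : 'M[R[i]]_2).
Proof. by rewrite /upper_tri /= mxE. Qed.

Lemma upper_tri1 : upper_tri (1 : 'M[R[i]]_2).
Proof. by rewrite /upper_tri /= mxE. Qed.

Lemma op_norm_le_hom_norm a :
  cb_bounded ip phi -> upper_tri a -> mx2_norm a <= 1 -> op_norm ip (phi a) <= hom_norm ip phi.
Proof.
move=> [M phi_cb] ua a_le1; apply: ub_le_sup; last by exists a.
exists `|M| => _ [b [ub b_le1] <-].
apply: le_trans (phi_cb 1 (fun _ _ => b) (fun _ _ => ub)) (mulr_le_norm _ _).
by rewrite mx2_norm_ge0.
Qed.

Lemma mx2_norm_le_hom_inv_norm a :
  cb_inv_bounded ip phi -> upper_tri a -> op_norm ip (phi a) <= 1 ->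
  mx2_norm a <= hom_inv_norm ip phi.
Proof.
move=> [M phiV_cb] ua phia_le1; apply: ub_le_sup; last by exists a.
exists `|M| => _ [b [ub phib_le1] <-].
apply: le_trans (phiV_cb 1 (fun _ _ => b) (fun _ _ => ub)) (mulr_le_norm _ _).
by rewrite op_norm_ge0.
Qed.

Lemma hom_norm_ge1 : is_inj_hom ip phi -> cb_bounded ip phi -> 1 <= hom_norm ip phi.
Proof.
move=> [phi_bnd phi_lin phi_mul phi_inj] phi_cb.
have phi0 x : phi 0 x = 0.
  have := phi_lin 1 0 0 upper_tri0 upper_tri0 x; rewrite scale1r addr0 scale1r.
  by rewrite -[X in X = _]addr0 => /addrI.
have [x phi1x] : exists x, phi 1 x != 0.
  case: (pselect (exists x, phi 1 x != 0)) => // phi1_0.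
  suff one0 : (1 : 'M[R[i]]_2) = 0 by have := @oner_neq0 'M[R[i]]_2; rewrite one0 eqxx.
  apply: phi_inj upper_tri1 upper_tri0 _; apply/funext => x.
  by rewrite phi0; apply/eqP/negPn/negP => phi1x; apply: phi1_0; exists x.
have [phi1_lin [M phi1_bnd]] := phi_bnd 1 upper_tri1.
apply: le_trans (op_norm_le_hom_norm phi_cb upper_tri1 (mx2_norm1 R)).
apply: (op_norm_ge1 hH phi1_lin phi1_bnd phi1x).
by rewrite -phi_mul ?mulr1 //; exact: upper_tri1.
Qed.

Lemma A_phi_adjoint a :
  A_phi ip phi a -> exists2 b, A_phi ip phi b & forall x y, ip (phi b x) y = ip x (phi a y).
Proof.
case: hH => _ ipC _ _ _ [ua [_ [_ [b ub <-] adj]]].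
exists b => //; split => //; split; first by exists b.
by exists (phi a); [exists a | move=> x y; rewrite ipC -adj -ipC].
Qed.

Lemma A_phi_idem_contraction p :
  is_inj_hom ip phi -> (forall a b, A_phi ip phi a -> A_phi ip phi b -> a * b = b * a) ->
  A_phi ip phi p -> p * p = p -> op_norm ip (phi p) <= 1.
Proof.
move=> [phi_bnd _ phi_mul _] A_phiC Ap pp; have [b Ab adj] := A_phi_adjoint Ap.
have [[linp _] [linb _]] := (phi_bnd p Ap.1, phi_bnd b Ab.1).
apply: (op_norm_le1 hH); apply: (normal_idempotent_contraction hH linp linb _ adj).
- by move=> x; rewrite -phi_mul ?pp //; exact: Ap.1.
- move=> x; rewrite -!phi_mul; first by rewrite [b * p]A_phiC.
  all: by [exact: Ap.1 | exact: Ab.1].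
Qed.

End HomNorms.

Theorem lemma2 (R : realType) (c : R[i]) (H : lmodType R[i]) (ip : H -> H -> R[i])
  (phi : 'M[R[i]]_2 -> H -> H) :
  c != 0 -> is_hilbert ip -> in_Phi ip phi -> A_phi ip phi = Vc c ->
  hom_norm ip phi * hom_inv_norm ip phi >= 1 / Normc.normc c.
Proof.
move=> c0 hH [phi_hom phi_cb phiV_cb] A_phiE.
have VcP : Vc c (Vc_idem c) := Vc_idem_in_Vc c0.
have phiP_le1 : op_norm ip (phi (Vc_idem c)) <= 1.
  apply: (A_phi_idem_contraction hH phi_hom _ _ (Vc_idem_idem c)); rewrite A_phiE //.
  exact: Vc_mulC.
have invc_le : (Normc.normc c)^-1 <= hom_inv_norm ip phi.
  apply: le_trans (mx2_norm_Vc_idem c) _.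
  exact: (mx2_norm_le_hom_inv_norm hH phiV_cb VcP.1 phiP_le1).
have one_le : 1 <= hom_norm ip phi := hom_norm_ge1 hH phi_hom phi_cb.
have invc_ge0 : 0 <= (Normc.normc c)^-1 by case: (c) => *; rewrite invr_ge0 sqrtr_ge0.
rewrite div1r; nra.
Qed.
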